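(* For every restriction category $\mathbb{X}$, the restriction category $\mathbf{R}[\mathbf{L}[\mathbb{X}]]$ is isomorphic, as a restriction category, to $\mathbb{X}$, and this isomorphism is natural in $\mathbb{X}$.
   Context: Composition is diagrammatic. A restriction category is a category with an assignment to each $f:A\to B$ of $\bar f:A\to A$ such that $\bar ff=f$; $\bar f\bar g=\bar g\bar f$ and $\bar g\bar f=\overline{\bar gf}$ for $f:A\to B$, $g:A\to C$; $f\bar g=\overline{fg}f$ for $f:A\to B$, $g:B\to C$. A restriction idempotent is $a$ with $a=\bar a$. An isomorphism of restriction categories is an isomorphism of categories preserving the restriction operation; naturality is with respect to restriction functors (functors with $F\bar f=\overline{Ff}$). $\mathbf{L}[\mathbb{X}]$: objects pairs $(A,a)$, $a$ a restriction idempotent on $A$; morphisms $f:(A,a)\to(B,b)$ are morphisms $f:A\to B$ of $\mathbb{X}$ with $\bar f=a$ and $fb=f$; identity $a$; composition as in $\mathbb{X}$; local structure $\mathsf{L}(A,a)=(A,\mathrm{id}_A)$ and $\eta_{(A,a)}=a$. For a restriction functor $F$, $\mathbf{L}[F](A,a)=(FA,Fa)$ and $\mathbf{L}[F]f=Ff$. For a local category $\mathbb{C}$ (a category with objects $\mathsf{L}M$ and monics $\eta_M:M\to\mathsf{L}M$ satisfying $\mathsf{L}\mathsf{L}M=\mathsf{L}M$, $\eta_{\mathsf{L}M}=\mathrm{id}$, and existence of pullbacks of $\eta_M$ along any $f:N\to\mathsf{L}M$ with leg $m:P\to N$, $\mathsf{L}P=\mathsf{L}N$, $m\eta_N=\eta_P$),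 $\mathbf{R}[\mathbb{C}]$ has objects the total objects ($M=\mathsf{L}M$, $\eta_M=\mathrm{id}$); morphisms $M\to N$ are isomorphism classes of pairs $(U,f)$ with $\mathsf{L}U=M$, $f:U\to N$ ($(U,f)\cong(V,g)$ via an iso $\varphi:U\to V$ with $\varphi\eta_V=\eta_U$, $\varphi g=f$); identity $(M,\mathrm{id}_M)$; $(U,f)(V,g)=(W,\pi_Vg)$ with $W,\pi_V$ a pullback of $\eta_V$ along $f$; restriction $\overline{(U,f)}=(U,\eta_U)$. For a local functor $F$, $\mathbf{R}[F](U,f)=(FU,Ff)$. *)

From Stdlib Require Import ProofIrrelevance ClassicalEpsilon.
From Stdlib Require Export JMeq.

Set Implicit Arguments.
Unset Strict Implicit.

(* Categories (data), composition is diagrammatic: comp f g = "f then g". *)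
Record Cat := mkCat {
  Ob : Type;
  Hom : Ob -> Ob -> Type;
  idm : forall A, Hom A A;
  comp : forall A B C, Hom A B -> Hom B C -> Hom A C }.
Arguments Hom : clear implicits.
Arguments idm {c} A.
Arguments comp {c A B C} f g.

Definition is_cat (K : Cat) : Prop :=
  (forall A B (f : Hom K A B), comp (idm A) f = f) /\
  (forall A B (f : Hom K A B), comp f (idm B) = f) /\
  (forall A B D E (f : Hom K A B) (g : Hom K B D) (h : Hom K D E),
      comp (comp f g) h = comp f (comp g h)).

Record RCat := mkRCat {
  rcat :> Cat;
  rst : forall A B, Hom rcat A B -> Hom rcat A A }.
Arguments rst {r A B} f.

Definition is_rcat (X : RCat) : Prop :=
  is_cat X /\
  (forall A B (f : Hom X A B), comp (rst f) f = f) /\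
  (forall A B C (f : Hom X A B) (g : Hom X A C),
      comp (rst f) (rst g) = comp (rst g) (rst f)) /\
  (forall A B C (f : Hom X A B) (g : Hom X A C),
      comp (rst g) (rst f) = rst (comp (rst g) f)) /\
  (forall A B C (f : Hom X A B) (g : Hom X B C),
      comp f (rst g) = comp (rst (comp f g)) f).

Record Fun (C D : Cat) := mkFun {
  fobj : Ob C -> Ob D;
  fmap : forall A B, Hom C A B -> Hom D (fobj A) (fobj B) }.
Arguments fobj {C D} f A.
Arguments fmap {C D} f {A B} f0.

Definition is_functor (C D : Cat) (F : Fun C D) : Prop :=
  (forall A, fmap F (idm A) = idm (fobj F A)) /\
  (forall A B E (f : Hom C A B) (g : Hom C B E),
      fmap F (comp f g) = comp (fmap F f) (fmap F g)).

Definition is_rfunctor (X Y : RCat) (F : Fun X Y) : Prop :=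
  is_functor F /\ (forall A B (f : Hom X A B), fmap F (rst f) = rst (fmap F f)).

Definition Fid (C : Cat) : Fun C C := @mkFun C C (fun A => A) (fun A B f => f).

Definition Fcomp (C D E : Cat) (F : Fun C D) (G : Fun D E) : Fun C E :=
  @mkFun C E (fun A => fobj G (fobj F A)) (fun A B f => fmap G (fmap F f)).

(* equality of functors (objects equal, morphisms equal up to the
   induced identification of hom-types) *)
Definition feq (C D : Cat) (F G : Fun C D) : Prop :=
  exists e : forall A, fobj F A = fobj G A,
    forall A B (f : Hom C A B), JMeq (fmap F f) (fmap G f).

Definition is_rcat_iso (X Y : RCat) (F : Fun X Y) : Prop :=
  is_rfunctor F /\
  exists G : Fun Y X, is_functor G /\ feq (Fcomp F G) (Fid X) /\ feq (Fcomp G F) (Fid Y).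

(* The pullback of eta_M along f : N -> L M is
   given as chosen data (object pbO f, legs pbm f : P -> N, pbg f : P -> M),
   together with the equation L P = L N (needed to form morphisms of R[C]). *)
Record LocCat := mkLoc {
  lcat :> Cat;
  Lo : Ob lcat -> Ob lcat;
  eta : forall M, Hom lcat M (Lo M);
  pbO : forall M N, Hom lcat N (Lo M) -> Ob lcat;
  pbm : forall M N (f : Hom lcat N (Lo M)), Hom lcat (pbO f) N;
  pbg : forall M N (f : Hom lcat N (Lo M)), Hom lcat (pbO f) M;
  pbL : forall M N (f : Hom lcat N (Lo M)), Lo (pbO f) = Lo N }.
Arguments Lo {l} M.
Arguments eta {l} M.
Arguments pbO {l M N} f.
Arguments pbm {l M N} f.
Arguments pbg {l M N} f.
Arguments pbL {l M N} f.

Definition is_local_cat (C : LocCat) : Prop :=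
  is_cat C /\
  (forall M A (f g : Hom C A M), comp f (eta M) = comp g (eta M) -> f = g) /\
  (forall M : Ob C, Lo (Lo M) = Lo M) /\
  (forall M : Ob C, JMeq (eta (Lo M)) (idm (Lo M))) /\
  (forall M N (f : Hom C N (Lo M)),
     comp (pbm f) f = comp (pbg f) (eta M) /\
     JMeq (comp (pbm f) (eta N)) (eta (pbO f)) /\
     (forall Q (h : Hom C Q N) (k : Hom C Q M), comp h f = comp k (eta M) ->
        exists q : Hom C Q (pbO f), comp q (pbm f) = h /\ comp q (pbg f) = k /\
          forall q' : Hom C Q (pbO f), comp q' (pbm f) = h -> comp q' (pbg f) = k -> q' = q)).

Record LFun (C D : LocCat) := mkLFun {
  lfun :> Fun C D;
  lfL : forall M, fobj lfun (Lo M) = Lo (fobj lfun M);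
  lfeta : forall M, JMeq (fmap lfun (eta M)) (eta (fobj lfun M)) }.

Definition castH (C : Cat) (A X Y : Ob C) (e : X = Y) (f : Hom C A X) : Hom C A Y :=
  eq_rect X (Hom C A) f Y e.

Record Rpre (C : LocCat) (M N : Ob C) := mkRpre {
  rU : Ob C;
  rL : Lo rU = M;
  rf : Hom C rU N }.
Arguments rU {C M N} r.
Arguments rL {C M N} r.
Arguments rf {C M N} r.

Definition Rrel (C : LocCat) (M N : Ob C) (p q : Rpre M N) : Prop :=
  exists phi : Hom C (rU p) (rU q),
    (exists psi : Hom C (rU q) (rU p), comp phi psi = idm _ /\ comp psi phi = idm _) /\
    JMeq (comp phi (eta (rU q))) (eta (rU p)) /\
    comp phi (rf q) = rf p.

(* morphisms of R[C]: equivalence classes of pairs *)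
Definition Rhom (C : LocCat) (M N : Ob C) : Type :=
  { P : Rpre M N -> Prop | exists p, P = Rrel p }.

Definition Rcls (C : LocCat) (M N : Ob C) (p : Rpre M N) : Rhom M N :=
  exist _ (Rrel p) (ex_intro _ p eq_refl).

Definition Rrep (C : LocCat) (M N : Ob C) (x : Rhom M N) : Rpre M N :=
  proj1_sig (constructive_indefinite_description _ (proj2_sig x)).

Definition Rtot (C : LocCat) (M : Ob C) : Prop := Lo M = M /\ JMeq (eta M) (idm M).

Definition Rob (C : LocCat) : Type := { M : Ob C | Rtot M }.

Definition Rid (C : LocCat) (M : Rob C) : Rhom (proj1_sig M) (proj1_sig M) :=
  Rcls (@mkRpre C _ _ (proj1_sig M) (proj1 (proj2_sig M)) (idm (proj1_sig M))).

(* (U,f)(V,g) = (W, pi_V g) with W, pi_V a pullback of eta_V along f *)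
Definition Rcomp (C : LocCat) (M N K : Ob C) (x : Rhom M N) (y : Rhom N K) : Rhom M K :=
  let p := Rrep x in
  let q := Rrep y in
  let f' : Hom C (rU p) (Lo (rU q)) := castH (eq_sym (rL q)) (rf p) in
  Rcls (@mkRpre C M K (pbO f') (eq_trans (pbL f') (rL p)) (comp (pbg f') (rf q))).

Definition Rrst (C : LocCat) (M N : Ob C) (x : Rhom M N) : Rhom M M :=
  let p := Rrep x in
  Rcls (@mkRpre C M M (rU p) (rL p) (castH (rL p) (eta (rU p)))).

Definition Rcat (C : LocCat) : RCat :=
  @mkRCat
    (@mkCat (Rob C) (fun M N => Rhom (proj1_sig M) (proj1_sig N))
            (fun M => Rid M)
            (fun M N K x y => Rcomp x y))
    (fun M N x => Rrst x).

Lemma fmap_JMeq (C D : Cat) (G : Fun C D) (M X : Ob C) (e : X = M)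
  (f : Hom C M X) (g : Hom C M M) : JMeq f g -> JMeq (fmap G f) (fmap G g).
Proof. intros H. subst X. rewrite (JMeq_eq H). reflexivity. Qed.

Lemma R_fun_tot (C D : LocCat) (G : LFun C D)
  (hG : forall A, fmap G (idm A) = idm (fobj G A)) (M : Ob C) :
  Rtot M -> Rtot (fobj G M).
Proof.
  intros [e j]. split.
  - rewrite <- (lfL G M). rewrite e. reflexivity.
  - apply (@JMeq_trans _ _ _ _ (fmap G (eta M))).
    + apply JMeq_sym. apply lfeta.
    + rewrite <- hG. exact (fmap_JMeq G e j).
Qed.

Definition R_fun (C D : LocCat) (G : LFun C D)
  (hG : forall A, fmap G (idm A) = idm (fobj G A)) : Fun (Rcat C) (Rcat D) :=
  @mkFun (Rcat C) (Rcat D)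
    (fun M => exist _ (fobj G (proj1_sig M)) (R_fun_tot hG (proj2_sig M)))
    (fun M N x =>
       let p := Rrep x in
       Rcls (@mkRpre D (fobj G (proj1_sig M)) (fobj G (proj1_sig N))
               (fobj G (rU p))
               (eq_trans (eq_sym (lfL G (rU p))) (f_equal (fobj G) (rL p)))
               (fmap G (rf p)))).

Section RFacts.
Variable X : RCat.
Variable hX : is_rcat X.

Lemma rc_idl A B (f : Hom X A B) : comp (idm A) f = f.
Proof. destruct hX as [[h _] _]. apply h. Qed.
Lemma rc_idr A B (f : Hom X A B) : comp f (idm B) = f.
Proof. destruct hX as [[_ [h _]] _]. apply h. Qed.
Lemma rc_assoc A B D E (f : Hom X A B) (g : Hom X B D) (h : Hom X D E) :
  comp (comp f g) h = comp f (comp g h).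
Proof. destruct hX as [[_ [_ H]] _]. apply H. Qed.
Lemma rc_R1 A B (f : Hom X A B) : comp (rst f) f = f.
Proof. destruct hX as [_ [h _]]. apply h. Qed.
Lemma rc_R2 A B C (f : Hom X A B) (g : Hom X A C) :
  comp (rst f) (rst g) = comp (rst g) (rst f).
Proof. destruct hX as [_ [_ [h _]]]. apply h. Qed.
Lemma rc_R3 A B C (f : Hom X A B) (g : Hom X A C) :
  comp (rst g) (rst f) = rst (comp (rst g) f).
Proof. destruct hX as [_ [_ [_ [h _]]]]. apply h. Qed.
Lemma rc_R4 A B C (f : Hom X A B) (g : Hom X B C) :
  comp f (rst g) = comp (rst (comp f g)) f.
Proof. destruct hX as [_ [_ [_ [_ h]]]]. apply h. Qed.

Lemma rst_id (A : Ob X) : rst (idm A) = idm A.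
Proof. rewrite <- (rc_idr (rst (idm A))). apply rc_R1. Qed.

Lemma rst_idem A B (f : Hom X A B) : rst (rst f) = rst f.
Proof.
  assert (H1 : comp (rst f) (rst f) = rst f).
  { rewrite (rc_R3 f f). rewrite rc_R1. reflexivity. }
  assert (H2 : comp (rst f) (rst (rst f)) = rst (rst f)).
  { rewrite (rc_R3 (rst f) f). rewrite H1. reflexivity. }
  rewrite <- H2. rewrite <- (rc_R2 (rst f) f). apply rc_R1.
Qed.

Lemma idem_of_rst (A : Ob X) (a : Hom X A A) : rst a = a -> comp a a = a.
Proof. intros H. rewrite <- H at 1. apply rc_R1. Qed.

Lemma rst_comp_le A B C (f : Hom X A B) (g : Hom X B C) :
  comp (rst (comp f g)) (rst f) = rst (comp f g).
Proof.
  rewrite <- rc_R2. rewrite rc_R3. rewrite <- rc_assoc. rewrite rc_R1. reflexivity.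
Qed.

Lemma rst_comp_rst A B C (f : Hom X A B) (g : Hom X B C) :
  rst (comp f (rst g)) = rst (comp f g).
Proof.
  rewrite rc_R4. rewrite <- rc_R3. apply rst_comp_le.
Qed.
End RFacts.

Record LOb (X : RCat) := mkLOb {
  lA : Ob X;
  la : Hom X lA lA;
  lap : rst la = la }.
Arguments lA {X} l.
Arguments la {X} l.
Arguments lap {X} l.

Definition LHom (X : RCat) (P Q : LOb X) : Type :=
  { f : Hom X (lA P) (lA Q) | rst f = la P /\ comp f (la Q) = f }.

Definition L_idm (X : RCat) (hX : is_rcat X) (P : LOb X) : LHom P P :=
  exist _ (la P) (conj (lap P) (idem_of_rst hX (lap P))).

Lemma L_comp_pf (X : RCat) (hX : is_rcat X) (P Q S : LOb X)
  (f : LHom P Q) (g : LHom Q S) :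
  rst (comp (proj1_sig f) (proj1_sig g)) = la P /\
  comp (comp (proj1_sig f) (proj1_sig g)) (la S) = comp (proj1_sig f) (proj1_sig g).
Proof.
  destruct f as [f [f1 f2]], g as [g [g1 g2]]; simpl. split.
  - rewrite <- (rst_comp_rst hX). rewrite g1. rewrite f2. exact f1.
  - rewrite (rc_assoc hX). rewrite g2. reflexivity.
Qed.

Definition L_comp (X : RCat) (hX : is_rcat X) (P Q S : LOb X)
  (f : LHom P Q) (g : LHom Q S) : LHom P S :=
  exist _ (comp (proj1_sig f) (proj1_sig g)) (L_comp_pf hX f g).

Definition L_Lo (X : RCat) (hX : is_rcat X) (P : LOb X) : LOb X :=
  @mkLOb X (lA P) (idm (lA P)) (rst_id hX (lA P)).

Definition L_eta (X : RCat) (hX : is_rcat X) (P : LOb X) : LHom P (L_Lo hX P) :=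
  exist _ (la P) (conj (lap P) (rc_idr hX (la P))).

(* pullback of eta_M = m along f : N -> L M : the object (N, rst (f m)) *)
Definition L_pbO (X : RCat) (hX : is_rcat X) (M N : LOb X)
  (f : LHom N (L_Lo hX M)) : LOb X :=
  @mkLOb X (lA N) (rst (comp (proj1_sig f) (la M))) (rst_idem hX _).

Lemma L_pbm_pf (X : RCat) (hX : is_rcat X) (M N : LOb X) (f : LHom N (L_Lo hX M)) :
  rst (rst (comp (proj1_sig f) (la M))) = la (L_pbO f) /\
  comp (rst (comp (proj1_sig f) (la M))) (la N) = rst (comp (proj1_sig f) (la M)).
Proof.
  split.
  - apply (rst_idem hX).
  - destruct f as [f [f1 f2]]; simpl. rewrite <- f1. apply (rst_comp_le hX).
Qed.

Definition L_pbm (X : RCat) (hX : is_rcat X) (M N : LOb X) (f : LHom N (L_Lo hX M)) :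
  LHom (L_pbO f) N := exist _ (rst (comp (proj1_sig f) (la M))) (L_pbm_pf f).

Lemma L_pbg_pf (X : RCat) (hX : is_rcat X) (M N : LOb X) (f : LHom N (L_Lo hX M)) :
  rst (comp (proj1_sig f) (la M)) = la (L_pbO f) /\
  comp (comp (proj1_sig f) (la M)) (la M) = comp (proj1_sig f) (la M).
Proof.
  split.
  - reflexivity.
  - rewrite (rc_assoc hX). simpl. rewrite (idem_of_rst hX (lap M)). reflexivity.
Qed.

Definition L_pbg (X : RCat) (hX : is_rcat X) (M N : LOb X) (f : LHom N (L_Lo hX M)) :
  LHom (L_pbO f) M := exist _ (comp (proj1_sig f) (la M)) (L_pbg_pf f).

Definition LX (X : RCat) (hX : is_rcat X) : LocCat :=
  @mkLoc (@mkCat (LOb X) (@LHom X) (L_idm hX) (fun P Q S f g => L_comp hX f g))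
         (L_Lo hX) (L_eta hX)
         (fun M N f => L_pbO f) (fun M N f => L_pbm f) (fun M N f => L_pbg f)
         (fun M N f => eq_refl).

Lemma L_fobj_pf (X Y : RCat) (F : Fun X Y) (hF : is_rfunctor F) (P : LOb X) :
  rst (fmap F (la P)) = fmap F (la P).
Proof. destruct hF as [_ h]. rewrite <- h. rewrite (lap P). reflexivity. Qed.

Definition L_fobj (X Y : RCat) (F : Fun X Y) (hF : is_rfunctor F) (P : LOb X) : LOb Y :=
  @mkLOb Y (fobj F (lA P)) (fmap F (la P)) (L_fobj_pf hF P).

Lemma L_fmap_pf (X Y : RCat) (F : Fun X Y) (hF : is_rfunctor F) (P Q : LOb X)
  (f : LHom P Q) :
  rst (fmap F (proj1_sig f)) = la (L_fobj hF P) /\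
  comp (fmap F (proj1_sig f)) (la (L_fobj hF Q)) = fmap F (proj1_sig f).
Proof.
  destruct f as [f [f1 f2]]; simpl. destruct hF as [[_ hc] hr]. split.
  - rewrite <- hr. rewrite f1. reflexivity.
  - rewrite <- hc. rewrite f2. reflexivity.
Qed.

Definition L_fmap (X Y : RCat) (F : Fun X Y) (hF : is_rfunctor F) (P Q : LOb X)
  (f : LHom P Q) : LHom (L_fobj hF P) (L_fobj hF Q) :=
  exist _ (fmap F (proj1_sig f)) (L_fmap_pf hF f).

Lemma mkLOb_eq (X : RCat) (A : Ob X) (a a' : Hom X A A) (p : rst a = a) (p' : rst a' = a') :
  a = a' -> mkLOb p = mkLOb p'.
Proof. intros H. subst a'. f_equal. apply proof_irrelevance. Qed.

Lemma LHom_eq (X : RCat) (P Q : LOb X) (f g : LHom P Q) :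
  proj1_sig f = proj1_sig g -> f = g.
Proof.
  destruct f as [f pf], g as [g pg]; simpl. intros H. subst g.
  f_equal. apply proof_irrelevance.
Qed.

Lemma LHom_JMeq (X : RCat) (P Q Q' : LOb X) (e : Q = Q') (f : LHom P Q) (g : LHom P Q') :
  JMeq (proj1_sig f) (proj1_sig g) -> JMeq f g.
Proof.
  intros H. subst Q'. rewrite (LHom_eq (JMeq_eq H)). reflexivity.
Qed.

Lemma L_fun_L (X Y : RCat) (hX : is_rcat X) (hY : is_rcat Y) (F : Fun X Y)
  (hF : is_rfunctor F) (P : LOb X) :
  L_fobj hF (L_Lo hX P) = L_Lo hY (L_fobj hF P).
Proof.
  unfold L_fobj, L_Lo; simpl. apply mkLOb_eq. destruct hF as [[h _] _]. apply h.
Qed.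

Lemma L_fun_eta (X Y : RCat) (hX : is_rcat X) (hY : is_rcat Y) (F : Fun X Y)
  (hF : is_rfunctor F) (P : LOb X) :
  JMeq (L_fmap hF (L_eta hX P)) (L_eta hY (L_fobj hF P)).
Proof. apply (LHom_JMeq (L_fun_L hX hY hF P)). reflexivity. Qed.

Definition L_fun (X Y : RCat) (hX : is_rcat X) (hY : is_rcat Y) (F : Fun X Y)
  (hF : is_rfunctor F) : LFun (LX hX) (LX hY) :=
  @mkLFun (LX hX) (LX hY)
    (@mkFun (LX hX) (LX hY) (L_fobj hF) (fun P Q f => L_fmap hF f))
    (L_fun_L hX hY hF) (L_fun_eta hX hY hF).

Lemma L_fun_id (X Y : RCat) (hX : is_rcat X) (hY : is_rcat Y) (F : Fun X Y)
  (hF : is_rfunctor F) :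
  forall P, fmap (L_fun hX hY hF) (idm P) = idm (fobj (L_fun hX hY hF) P).
Proof. intros P. apply LHom_eq. reflexivity. Qed.

From Stdlib Require Import ProofIrrelevance Eqdep ClassicalEpsilon.
Set Implicit Arguments.
Unset Strict Implicit.

(* A total object of L[X] is (A, 1), and a pair (U, f) with L U = (A, 1) has
   U = (A, rst f); so a morphism of R[L[X]] is determined by its underlying
   map f of X, provided each class has one representative.  It does: an
   isomorphism phi : (A, a) -> (A, b) of L[X] with phi eta = eta satisfies
   phi = phi b = a, its inverse is b, and restriction idempotents with
   ab = a and ba = b coincide since they commute.  Taking underlying maps is
   therefore a bijection on hom-sets; it preserves composites because the
   pullback of eta_(B,b) along f in L[X] is (A, rst (f b)) with leg f b, and
   it is natural on the nose because L[F] acts by F on underlying maps. *)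

Lemma eq_JMeq (T : Type) (x y : T) : x = y -> JMeq x y.
Proof. intros ->. reflexivity. Qed.

Section RClasses.
Variable C : LocCat.

Lemma Rrel_refl (hC : is_cat C) (M N : Ob C) (p : Rpre M N) : Rrel p p.
Proof.
  destruct hC as [idl _].
  exists (idm (rU p)). repeat split.
  - exists (idm (rU p)). split; apply idl.
  - apply eq_JMeq, idl.
  - apply idl.
Qed.

Lemma Rrel_Rrep (M N : Ob C) (x : Rhom M N) : Rrel (Rrep x) = proj1_sig x.
Proof.
  unfold Rrep. destruct (constructive_indefinite_description _ _) as [p hp].
  symmetry. exact hp.
Qed.

Lemma Rcls_Rrep (M N : Ob C) (x : Rhom M N) : Rcls (Rrep x) = x.
Proof.
  apply eq_sig_hprop; [intros; apply proof_irrelevance|]. apply Rrel_Rrep.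
Qed.

Definition Rpre_pair (M N : Ob C) (p : Rpre M N) : {U : Ob C & Hom C U N} :=
  existT _ (rU p) (rf p).

Lemma Rpre_pair_inj (M N : Ob C) (p q : Rpre M N) : Rpre_pair p = Rpre_pair q -> p = q.
Proof.
  destruct p as [U eU f], q as [V eV g]. unfold Rpre_pair; simpl. intros H.
  assert (UV : U = V) by exact (f_equal (@projT1 _ _) H). subst V.
  apply inj_pair2 in H. subst g.
  f_equal. apply proof_irrelevance.
Qed.

End RClasses.

Section RLX.
Variable X : RCat.
Hypothesis hX : is_rcat X.
Local Notation LC := (LX hX).

Lemma rst_idem_antisym (A : Ob X) (a b : Hom X A A) :
  rst a = a -> rst b = b -> comp a b = a -> comp b a = b -> a = b.
Proof.
  intros ra rb ab ba.
  transitivity (comp a b); [symmetry; exact ab|].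
  transitivity (comp b a); [|exact ba].
  rewrite <- ra, <- rb. apply (rc_R2 hX).
Qed.

Lemma LX_is_cat : is_cat LC.
Proof.
  repeat split.
  - intros P Q [f [f_dom f_cod]]. apply LHom_eq; simpl. rewrite <- f_dom. apply (rc_R1 hX).
  - intros P Q [f [f_dom f_cod]]. apply LHom_eq; simpl. exact f_cod.
  - intros P Q S T f g h. apply LHom_eq; simpl. apply (rc_assoc hX).
Qed.

Lemma L_eta_iso_trivial (A : Ob X) (a b : Hom X A A) (ra : rst a = a) (rb : rst b = b)
  (phi : LHom (mkLOb ra) (mkLOb rb)) (psi : LHom (mkLOb rb) (mkLOb ra)) :
  L_comp hX phi psi = L_idm hX _ -> L_comp hX psi phi = L_idm hX _ ->
  L_comp hX phi (L_eta hX _) = L_eta hX _ ->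
  a = b /\ proj1_sig phi = a.
Proof.
  destruct phi as [phi [phi_dom phi_cod]], psi as [psi [psi_dom psi_cod]].
  intros phipsi psiphi phi_eta.
  apply (f_equal (@proj1_sig _ _)) in phipsi, psiphi, phi_eta. simpl in *.
  assert (phi = a) by congruence. subst phi.
  assert (psi = b) by congruence. subst psi.
  split; [apply rst_idem_antisym|]; congruence.
Qed.

Lemma Rrel_LX_iff_eq (M N : LOb X) (p q : @Rpre LC M N) : Rrel p q <-> p = q.
Proof.
  split; [|intros <-; apply Rrel_refl, LX_is_cat].
  intros [phi [[psi [phipsi psiphi]] [phi_eta phi_f]]].
  apply Rpre_pair_inj.
  destruct p as [[A a ra] eU f], q as [[B b rb] eV g]; unfold Rpre_pair; simpl in *.
  assert (AB : B = A) by exact (f_equal (@lA X) (eq_trans eV (eq_sym eU))). subst B.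
  destruct (L_eta_iso_trivial phipsi psiphi (JMeq_eq phi_eta)) as [ab phi_a].
  subst b. assert (rb = ra) by apply proof_irrelevance. subst rb.
  f_equal. apply LHom_eq. rewrite <- phi_f. simpl in *. rewrite phi_a.
  destruct g as [g [g_dom g_cod]]; simpl in *. rewrite <- g_dom. apply (rc_R1 hX).
Qed.

Lemma Rrep_Rcls (M N : LOb X) (p : @Rpre LC M N) : Rrep (Rcls p) = p.
Proof.
  symmetry. apply Rrel_LX_iff_eq.
  change (proj1_sig (Rcls p) (Rrep (Rcls p))).
  rewrite <- Rrel_Rrep. apply Rrel_refl, LX_is_cat.
Qed.

Definition Rpre_hom (M N : LOb X) (p : @Rpre LC M N) : Hom X (lA M) (lA N) :=
  match rL p in _ = M' return Hom X (lA M') (lA N) with eq_refl => proj1_sig (rf p) end.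

Lemma Rpre_hom_JMeq (M N : LOb X) (p : @Rpre LC M N) : JMeq (Rpre_hom p) (proj1_sig (rf p)).
Proof. destruct p as [U e f]. destruct e. reflexivity. Qed.

Lemma Rpre_hom_comp (M N K : LOb X) (p : @Rpre LC M N) (q : @Rpre LC N K) :
  let f' := castH (eq_sym (rL q)) (rf p) in
  Rpre_hom (@mkRpre LC M K (pbO f') (eq_trans (pbL f') (rL p)) (comp (pbg f') (rf q)))
  = comp (Rpre_hom p) (Rpre_hom q).
Proof.
  destruct q as [V eV [g [g_dom g_cod]]], p as [U eU f]; simpl in *.
  destruct eV, eU; unfold Rpre_hom; simpl.
  rewrite (rc_assoc hX), <- g_dom, (rc_R1 hX). reflexivity.
Qed.

Lemma Rpre_hom_rst (M N : LOb X) (p : @Rpre LC M N) :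
  Rpre_hom (@mkRpre LC M M (rU p) (rL p) (castH (rL p) (eta (rU p)))) = rst (Rpre_hom p).
Proof. destruct p as [U e [f [f_dom f_cod]]]. destruct e. exact (eq_sym f_dom). Qed.

Lemma L_total_la (M : LOb X) : @Lo LC M = M -> la M = idm (lA M).
Proof.
  intros e. destruct M as [A a ra]. simpl in e.
  apply (f_equal (fun P => existT (fun B => Hom X B B) (lA P) (la P))) in e.
  apply inj_pair2 in e. symmetry. exact e.
Qed.

Definition Ltot (A : Ob X) : LOb X := mkLOb (rst_id hX A).

Lemma Ltot_Rtot (A : Ob X) : @Rtot LC (Ltot A).
Proof. split; [reflexivity|]. apply eq_JMeq, LHom_eq. reflexivity. Qed.

Definition RLob (A : Ob X) : Rob LC := exist _ (Ltot A) (Ltot_Rtot A).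

Lemma RLob_lA (M : Rob LC) : RLob (lA (proj1_sig M)) = M.
Proof.
  destruct M as [[A a ra] M_tot]. apply eq_sig_hprop; [intros; apply proof_irrelevance|].
  pose proof (L_total_la (proj1 M_tot)) as a_id. simpl in a_id. subst a.
  apply mkLOb_eq. reflexivity.
Qed.

Definition Rpre_of (A B : Ob X) (h : Hom X A B) : @Rpre LC (Ltot A) (Ltot B) :=
  @mkRpre LC (Ltot A) (Ltot B) (mkLOb (rst_idem hX h)) eq_refl
    (exist _ h (conj eq_refl (rc_idr hX h))).

Lemma Rpre_of_hom (A B : Ob X) (p : @Rpre LC (Ltot A) (Ltot B)) :
  @Rpre_of A B (Rpre_hom p) = p.
Proof.
  destruct p as [[A' a ra] e [f [f_dom f_cod]]].
  assert (AA : A' = A) by exact (f_equal (@lA X) e). subst A'.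
  assert (e = eq_refl) by apply proof_irrelevance. subst e.
  simpl in *. subst a. unfold Rpre_of, Rpre_hom; simpl.
  rewrite (proof_irrelevance _ ra (rst_idem hX f)). f_equal. apply subset_eq_compat. reflexivity.
Qed.

Definition RL_forget : Fun (Rcat LC) X :=
  @mkFun (Rcat LC) X (fun M => lA (proj1_sig M)) (fun M N x => Rpre_hom (Rrep x)).

Definition RL_embed : Fun X (Rcat LC) :=
  @mkFun X (Rcat LC) RLob (fun A B h => Rcls (Rpre_of h)).

Lemma RL_forget_embed (A B : Ob X) (h : Hom X A B) :
  fmap RL_forget (fmap RL_embed h) = h.
Proof. simpl. rewrite Rrep_Rcls. reflexivity. Qed.

Lemma RL_embed_forget (A B : Ob X) (x : Hom (Rcat LC) (RLob A) (RLob B)) :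
  fmap RL_embed (fmap RL_forget x) = x.
Proof. simpl. rewrite Rpre_of_hom. apply Rcls_Rrep. Qed.

Lemma RL_forget_id (M : Rob LC) : fmap RL_forget (@idm (Rcat LC) M) = idm (fobj RL_forget M).
Proof.
  simpl. unfold Rid. rewrite Rrep_Rcls. apply JMeq_eq.
  eapply JMeq_trans; [apply Rpre_hom_JMeq|].
  apply eq_JMeq, L_total_la, (proj2_sig M).
Qed.

Lemma RL_forget_rfunctor : is_rfunctor RL_forget.
Proof.
  split; [split|].
  - apply RL_forget_id.
  - intros M N K x y. simpl. unfold Rcomp. rewrite Rrep_Rcls. apply Rpre_hom_comp.
  - intros M N x. simpl. unfold Rrst. rewrite Rrep_Rcls. apply Rpre_hom_rst.
Qed.

Lemma RL_embed_functor : is_functor RL_embed.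
Proof.
  split.
  - intros A. change (fmap RL_embed (idm A) = @idm (Rcat LC) (RLob A)).
    rewrite <- (RL_embed_forget (@idm (Rcat LC) (RLob A))), RL_forget_id. reflexivity.
  - intros A B E h k.
    rewrite <- (RL_embed_forget (comp (fmap RL_embed h) (fmap RL_embed k))).
    destruct RL_forget_rfunctor as [[_ forget_comp] _].
    rewrite forget_comp, !RL_forget_embed. reflexivity.
Qed.

Lemma RL_forget_iso : is_rcat_iso RL_forget.
Proof.
  split; [apply RL_forget_rfunctor|].
  exists RL_embed. split; [apply RL_embed_functor|]. split.
  - exists RLob_lA. intros M N. rewrite <- (RLob_lA M), <- (RLob_lA N). intros x.
    apply eq_JMeq, RL_embed_forget.
  - exists (fun A => eq_refl). intros A B h. apply eq_JMeq, RL_forget_embed.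
Qed.

End RLX.

Lemma Rpre_hom_L_fun (X Y : RCat) (hX : is_rcat X) (hY : is_rcat Y) (F : Fun X Y)
  (hF : is_rfunctor F) (M N : LOb X) (p : @Rpre (LX hX) M N) :
  Rpre_hom (@mkRpre (LX hY) (L_fobj hF M) (L_fobj hF N) (L_fobj hF (rU p))
    (eq_trans (eq_sym (L_fun_L hX hY hF (rU p))) (f_equal (L_fobj hF) (rL p)))
    (L_fmap hF (rf p)))
  = fmap F (Rpre_hom p).
Proof. destruct p as [U e f]. destruct e. apply JMeq_eq, Rpre_hom_JMeq. Qed.

Lemma RL_forget_natural (X Y : RCat) (hX : is_rcat X) (hY : is_rcat Y) (F : Fun X Y)
  (hF : is_rfunctor F) :
  feq (Fcomp (R_fun (@L_fun_id X Y hX hY F hF)) (RL_forget hY))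
      (Fcomp (RL_forget hX) F).
Proof.
  exists (fun M => eq_refl). intros M N x.
  apply eq_JMeq. simpl. rewrite Rrep_Rcls. apply Rpre_hom_L_fun.
Qed.

Theorem proposition4p17 :
  exists Phi : forall (X : RCat) (hX : is_rcat X), Fun (Rcat (LX hX)) X,
    (forall (X : RCat) (hX : is_rcat X), is_rcat_iso (Phi X hX)) /\
    (forall (X Y : RCat) (hX : is_rcat X) (hY : is_rcat Y) (F : Fun X Y)
            (hF : is_rfunctor F),
       feq (Fcomp (@R_fun (LX hX) (LX hY) (L_fun hX hY hF)
                          (@L_fun_id X Y hX hY F hF))
                  (Phi Y hY))
           (Fcomp (Phi X hX) F)).
Proof.
  exists RL_forget. split.
  - apply RL_forget_iso.
  - apply RL_forget_natural.
Qed.
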